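(* Let $G=(L\cup R,E)$ be a Tanner graph without parallel edges and with no node of degree less than 2. Let $\mathcal{S}\in\mathcal{T}$ be an elementary trapping set of size $a$. Then for every elementary trapping set $\mathcal{S}'\in\mathcal{T}$ with $|\mathcal{S}'|=a+1$ and $\mathcal{S}\subset\mathcal{S}'$, the unique variable node $u\in\mathcal{S}'\setminus\mathcal{S}$ has all of its neighbors in $\Gamma(\mathcal{S})$ lying in $\Gamma_{\mathrm{o}}(\mathcal{S})$, i.e., $u$ is adjacent to no node of $\Gamma_{\mathrm{e}}(\mathcal{S})$.
   Context: A Tanner graph is a bipartite graph $G=(L\cup R,E)$ with variable nodes $L$ and check nodes $R$. For $\mathcal{S}\subset L$, $\Gamma(\mathcal{S})$ is the set of neighbors of $\mathcal{S}$ in $R$, and the induced subgraph $G(\mathcal{S})$ has node set $\mathcal{S}\cup\Gamma(\mathcal{S})$ and all edges of $G$ between $\mathcal{S}$ and $\Gamma(\mathcal{S})$. $\Gamma_{\mathrm{o}}(\mathcal{S})$ and $\Gamma_{\mathrm{e}}(\mathcal{S})$ are the check nodes of $\Gamma(\mathcal{S})$ with odd, respectively even, degree in $G(\mathcal{S})$ (unsatisfied, respectively satisfied, check nodes). $\mathcal{S}$ is an $(a,b)$ trapping set if $|\mathcal{S}|=a$ (its size) and $|\Gamma_{\mathrm{o}}(\mathcal{S})|=b$; it is elementary if every check node of $G(\mathcal{S})$ has degree one or two in $G(\mathcal{S})$. $\mathcal{T}$ denotes the set of all trapping sets $\mathcal{S}\subset L$ such that $G(\mathcal{S})$ is connected and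 every node of $\mathcal{S}$ is adjacent to at least two nodes of $\Gamma_{\mathrm{e}}(\mathcal{S})$. *)

(* A Tanner graph G = (L u R, E) is given by finite types L
   (variable nodes), R (check nodes) and an adjacency relation E : L -> R -> bool.
   Being a relation, E has no parallel edges. *)
From mathcomp Require Import all_boot.
Set Implicit Arguments. Unset Strict Implicit. Unset Printing Implicit Defensive.

Section Tanner.
Variables (L R : finType) (E : L -> R -> bool).

Definition vdeg (v : L) : nat := #|[set c | E v c]|.
Definition cdeg (c : R) : nat := #|[set v | E v c]|.

Definition min_deg2 : Prop :=
  (forall v, 2 <= vdeg v) /\ (forall c, 2 <= cdeg c).

Definition nbhd (S : {set L}) : {set R} := [set c | [exists v in S, E v c]].

Definition deg_in (S : {set L}) (c : R) : nat := #|[set v in S | E v c]|.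

Definition nbhd_o (S : {set L}) : {set R} := [set c in nbhd S | odd (deg_in S c)].
Definition nbhd_e (S : {set L}) : {set R} := [set c in nbhd S | ~~ odd (deg_in S c)].

Definition trapping_set (a b : nat) (S : {set L}) : Prop :=
  #|S| = a /\ #|nbhd_o S| = b.

Definition elementary (S : {set L}) : Prop :=
  forall c, c \in nbhd S -> (deg_in S c == 1) || (deg_in S c == 2).

Definition induced_node (S : {set L}) : pred (L + R) :=
  fun x => match x with inl v => v \in S | inr c => c \in nbhd S end.

Definition induced_edge (S : {set L}) : rel (L + R) :=
  fun x y => match x, y with
             | inl v, inr c => (v \in S) && E v c
             | inr c, inl v => (v \in S) && E v c
             | _, _ => false
             end.

Definition induced_connected (S : {set L}) : Prop :=
  forall x y, induced_node S x -> induced_node S y -> connect (induced_edge S) x y.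

Definition in_T (S : {set L}) : Prop :=
  induced_connected S /\ forall v, v \in S -> 2 <= #|[set c in nbhd_e S | E v c]|.

End Tanner.

From mathcomp Require Import all_boot.

Set Implicit Arguments. Unset Strict Implicit. Unset Printing Implicit Defensive.

(* A satisfied check node c of an elementary S has degree exactly 2 in G(S).
   If the new variable node u were adjacent to c, then c would have degree 3
   in G(S'), which is impossible since S' is elementary. *)

Section ElementaryExtension.
Variables (L R : finType) (E : L -> R -> bool).

Lemma mem_nbhd (S : {set L}) v c : v \in S -> E v c -> c \in nbhd E S.
Proof. by move=> vS Evc; rewrite inE; apply/existsP; exists v; rewrite vS. Qed.

Lemma elementary_deg_le2 (S : {set L}) c :
  elementary E S -> c \in nbhd E S -> deg_in E S c <= 2.
Proof. by move=> elS /elS /orP [] /eqP ->. Qed.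

Lemma elementary_even_deg2 (S : {set L}) c :
  elementary E S -> c \in nbhd E S -> ~~ odd (deg_in E S c) -> deg_in E S c = 2.
Proof. by move=> elS /elS /orP [] /eqP ->. Qed.

Lemma deg_in_ltn_add (S S' : {set L}) u c :
  S \subset S' -> u \in S' :\: S -> E u c -> deg_in E S c < deg_in E S' c.
Proof.
move=> sSS' /setDP [uS' uS] Euc.
have -> : (deg_in E S c).+1 = #|u |: [set v in S | E v c]|.
  by rewrite cardsU1 inE (negbTE uS).
apply: subset_leq_card; apply/subsetP => v; rewrite !inE.
case/orP => [/eqP -> | /andP [vS ->]]; first by rewrite uS' Euc.
by rewrite (subsetP sSS').
Qed.

Lemma elementary_ext_notin_nbhd_e (S S' : {set L}) u c :
  elementary E S -> elementary E S' -> S \subset S' -> u \in S' :\: S ->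
  c \in nbhd E S -> ~~ odd (deg_in E S c) -> ~~ E u c.
Proof.
move=> elS elS' sSS' uD cN even_c; apply/negP => Euc.
have uS' : u \in S' by case/setDP: uD.
have := deg_in_ltn_add sSS' uD Euc.
rewrite (elementary_even_deg2 elS cN even_c) ltnNge.
by rewrite (elementary_deg_le2 elS' (mem_nbhd uS' Euc)).
Qed.

End ElementaryExtension.

Theorem lemma2 (L R : finType) (E : L -> R -> bool) (S : {set L}) (a : nat) :
  min_deg2 E ->
  in_T E S -> elementary E S -> #|S| = a ->
  forall S' : {set L},
    in_T E S' -> elementary E S' -> #|S'| = a.+1 -> S \subset S' ->
    forall u, u \in S' :\: S ->
      (forall c, c \in nbhd E S -> E u c -> c \in nbhd_o E S) /\
      (forall c, c \in nbhd_e E S -> ~~ E u c).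
Proof.
move=> _ _ elS _ S' _ elS' _ sSS' u uD.
have notE := elementary_ext_notin_nbhd_e elS elS' sSS' uD.
split=> c.
  move=> cN Euc; rewrite inE cN /=; apply/negPn/negP => even_c.
  by move: (notE _ cN even_c); rewrite Euc.
by rewrite inE => /andP [cN even_c]; exact: notE.
Qed.
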